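(* Let $\sigma=\{\sigma_i\mid i\in I\}$ be a partition of the set of all primes and let $G$ be a finite group. If $G$ is a special $P\sigma T$-group, then $G$ is a $P\sigma T$-group.
   Context: All groups are finite. $\sigma=\{\sigma_i\mid i\in I\}$ is a partition of the set $\mathbb{P}$ of primes. For $n\in\mathbb{N}$, $\sigma(n)=\{\sigma_i\mid \sigma_i\cap\pi(n)\ne\emptyset\}$ with $\pi(n)$ the primes dividing $n$; $\sigma(G)=\sigma(|G|)$. A group is $\sigma$-primary if $|\sigma(G)|\le1$ and $\sigma$-nilpotent if it is a direct product of $\sigma$-primary groups. A Hall $\sigma_i$-subgroup of $G$ is a subgroup whose order has all prime divisors in $\sigma_i$ and whose index has none in $\sigma_i$. $G^{\mathfrak{N}_\sigma}$ is the intersection of all normal subgroups $N$ of $G$ with $G/N$ $\sigma$-nilpotent. A power automorphism of $D$ is an automorphism mapping every subgroup of $D$ onto itself. $G$ is a special $P\sigma T$-group if $D=G^{\mathfrak{N}_\sigma}$ is contained in a Hall $\sigma_i$-subgroup $E$ of $G$ for some $i$ and: (a) $D$ is a Hall subgroup of $G$ and conjugation by every element of $G$ is a power automorphism of $D$; (b) $D$ has a normal complement $S$ in $E$. A complete Hall $\sigma$-set of $G$ is a set $\mathcal{H}$ of subgroups such that every nontrivial member is a Hall $\sigma_i$-subgroup for some $i$ and $\mathcal{H}$ contains exactly one Hall $\sigma_i$-subgroup of $G$ for each $\sigma_i\in\sigma(G)$. A subgroup $A$ is $\sigma$-quasinormal in $G$ if $G$ has a complete Hall $\sigma$-set $\mathcal{H}$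 with $AH^x=H^xA$ for all $H\in\mathcal{H}$, $x\in G$. $G$ is a $P\sigma T$-group if whenever $K$ is $\sigma$-quasinormal in $H$ and $H$ is $\sigma$-quasinormal in $G$, then $K$ is $\sigma$-quasinormal in $G$. *)

From mathcomp Require Import all_boot all_fingroup.
From mathcomp Require Import all_solvable.
Set Implicit Arguments.
Unset Strict Implicit.
Unset Printing Implicit Defensive.
Local Open Scope group_scope.

(* A partition sigma = {sigma_i | i in I} of the primes is encoded by a map
   [sigma : nat -> nat] sending each prime p to the index i of the unique
   block sigma_i containing p (index set I = nat). *)

Definition sig (sigma : nat -> nat) (i : nat) : nat_pred := [pred p | sigma p == i].

Definition in_sigma_n (sigma : nat -> nat) (n i : nat) : Prop :=
  exists2 p, p \in \pi(n) & sigma p = i.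

Definition sigma_primary (sigma : nat -> nat) (gT : finGroupType) (G : {set gT}) : Prop :=
  forall i j, in_sigma_n sigma #|G| i -> in_sigma_n sigma #|G| j -> i = j.

Definition sigma_nilpotent (sigma : nat -> nat) (gT : finGroupType) (G : {set gT}) : Prop :=
  exists s : seq {group gT},
    \big[dprod/1]_(H <- s) (H : {set gT}) = G /\
    (forall H, H \in s -> sigma_primary sigma H).

Definition is_sigma_nil_residual (sigma : nat -> nat) (gT : finGroupType)
    (G D : {set gT}) : Prop :=
  forall x : gT, x \in D <->
    (forall N : {group gT}, N <| G -> sigma_nilpotent sigma (G / N) -> x \in N).

Definition conj_power_aut (gT : finGroupType) (G D : {set gT}) : Prop :=
  forall x, x \in G -> forall H : {group gT}, H \subset D -> H :^ x = H.

Definition special_PsT (sigma : nat -> nat) (gT : finGroupType) (G : {group gT}) : Prop :=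
  exists D : {group gT}, is_sigma_nil_residual sigma G D /\
  exists (i : nat) (E : {group gT}),
    [/\ (sig sigma i).-Hall(G) E, D \subset E,
        Hall G D /\ conj_power_aut G D
      & exists S : {group gT}, S ><| D = E].

Definition complete_Hall_sigma_set (sigma : nat -> nat) (gT : finGroupType)
    (G : {group gT}) (HH : {set {group gT}}) : Prop :=
  (forall H : {group gT}, H \in HH -> H :!=: 1 ->
      exists i, (sig sigma i).-Hall(G) H) /\
  (forall i, in_sigma_n sigma #|G| i ->
      exists! H : {group gT}, H \in HH /\ (sig sigma i).-Hall(G) H).

Definition sigma_quasinormal (sigma : nat -> nat) (gT : finGroupType)
    (G A : {group gT}) : Prop :=
  A \subset G /\
  exists HH : {set {group gT}}, complete_Hall_sigma_set sigma G HH /\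
    forall H : {group gT}, H \in HH -> forall x, x \in G ->
      A * (H :^ x) = (H :^ x) * A.

Definition PsT (sigma : nat -> nat) (gT : finGroupType) (G : {group gT}) : Prop :=
  forall K H : {group gT},
    sigma_quasinormal sigma H K -> sigma_quasinormal sigma G H ->
    sigma_quasinormal sigma G K.

(* Let D be the sigma-nilpotent residual of G.  For each j, the preimage W_j
   of O_sigma_j(G / D) is a normal Hall subgroup equal to T D for any Hall
   sigma_j-subgroup T.  Splitting elements into p-parts one shows:
   (1) if A is sigma-quasinormal in X <= G, then X :&: D normalises A:
       pi(D)-parts are moved to powers of themselves, sigma_i-parts outside
       pi(D) lie in S, which centralises D, and the sigma_j-parts, j != i,
       lie in (A :&: U)(D :&: A) for the Hall sigma_j-subgroup U of X
       permuting with A, and l in X :&: D moves u in A :&: U by a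
       commutator [u, l] in D :&: A U^l = D :&: A;
   (2) a subgroup A normalised by D permutes with every Hall sigma_j-subgroup
       T, since modulo D :&: A the group D centralises A.
   For K sigma-quasinormal in H sigma-quasinormal in G, (1) shows that D
   normalises H and H :&: D normalises K; a coprime action argument lifts
   this to D normalising K, and (2) makes K sigma-quasinormal in G. *)

From mathcomp Require Import all_boot all_fingroup all_solvable.
From mathcomp Require Import boolp.
Set Implicit Arguments.
Unset Strict Implicit.
Unset Printing Implicit Defensive.
Local Open Scope group_scope.

Section GroupFacts.

Variable gT : finGroupType.
Implicit Types (A U V X Y : {group gT}) (x y : gT).

Lemma constt_prod_ind (P : gT -> Prop) x :
  P 1 -> (forall y z, P y -> P z -> P (y * z)) -> (forall p : nat, P x.`_p) -> P x.
Proof. by move=> P1 PM Pp; rewrite -(prod_constt x); apply: big_ind => // p _. Qed.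

Lemma pHall_setI_commute pi X A U :
  pi.-Hall(X) U -> A \subset X -> commute A U -> pi.-Hall(A) (A :&: U).
Proof.
move=> hallU sAX cAU; have [sUX piU pi'iU] := and3P hallU.
have gAU : group_set (A * U) by apply/comm_group_setP.
have iAU : #|A : U| = #|Group gAU : U|.
  by rewrite -[RHS]divgS ?mulG_subr // -[#|Group gAU|]/#|A * U| -LagrangeMr mulnK.
rewrite /pHall subsetIl (pgroupS (subsetIr A U)) //= indexgI iAU.
by apply: pnat_dvd pi'iU; rewrite indexSg ?mulG_subr ?mul_subG.
Qed.

Lemma pHall_predU pi1 pi2 X U1 U2 V :
    pi1.-Hall(X) U1 -> pi2.-Hall(X) U2 -> U1 \subset V -> U2 \subset V ->
    V \subset X -> [predU pi1 & pi2].-group V ->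
  [predU pi1 & pi2].-Hall(X) V.
Proof.
move=> /and3P[_ _ pi1'i] /and3P[_ _ pi2'i] sU1V sU2V sVX piV.
rewrite /pHall sVX piV (eq_pnat _ (_ : _ =i [predI pi1^' & pi2^'])); last first.
  by move=> q; rewrite !inE negb_or.
by rewrite pnatI (pnat_dvd (indexgS X sU1V)) ?(pnat_dvd (indexgS X sU2V)).
Qed.

Lemma order_commg_dvd x y : commute y [~ x, y] -> #[[~ x, y]] %| #[y].
Proof.
move=> cyc; set c := [~ x, y].
have cJy : c ^ y = c by apply/conjg_fixP/commgP; apply: commute_sym.
have xJy : x ^ y = x * c by rewrite /c commgEl mulKVg.
have xJ n : x ^ (y ^+ n) = x * c ^+ n.
  elim: n => [|n IHn]; first by rewrite conjg1 mulg1.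
  by rewrite expgSr conjgM IHn conjMg conjXg cJy xJy -mulgA -expgS.
by rewrite order_dvdn; apply/eqP/(mulgI x); rewrite -xJ expg_order conjg1 mulg1.
Qed.

Lemma commg_imset_cent_TI Y x :
  x \in 'N(Y) -> 'C_Y[x] = 1 -> [set [~ y, x] | y in Y] = Y.
Proof.
move=> nYx tiYx.
have inj : {in Y &, injective (fun y => [~ y, x])}.
  move=> y1 y2 Yy1 Yy2 /= eq_c.
  have xJy1 : y1 ^ x = y1 * [~ y1, x] by rewrite commgEl mulKVg.
  have xJy2 : y2 ^ x = y2 * [~ y1, x] by rewrite eq_c commgEl mulKVg.
  have : y2 * y1^-1 \in 'C_Y[x].
    rewrite inE groupM ?groupV //; apply/cent1P/commgP/conjg_fixP.
    by rewrite conjMg conjVg xJy1 xJy2 invMg mulgA mulgK.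
  by rewrite tiYx inE -eq_mulgV1 => /eqP.
apply/eqP; rewrite eqEcard card_in_imset // leqnn andbT.
by apply/subsetP=> _ /imsetP[y Yy ->]; rewrite commgEl groupM ?groupV ?memJ_norm.
Qed.

End GroupFacts.

Section SigmaNilpotent.

Variables (sigma : nat -> nat) (rT : finGroupType) (Q : {group rT}).
Hypothesis nilQ : sigma_nilpotent sigma Q.

Lemma sigma_nilpotent_dprod j :
  exists P R : {group rT},
    [/\ P \x R = Q, (sig sigma j).-group P & (sig sigma j)^'.-group R].
Proof.
have [s [defQ primQ]] := nilQ.
have pgroup_prod pi (B : pred {group rT}) :
    (forall H, H \in s -> B H -> pi.-group H) ->
  pi.-nat (\prod_(H <- s | B H) #|H|)%N.
  move=> piB; rewrite big_seq_cond.
  apply: (big_ind (fun n => pi.-nat n)) => // [m n | H /andP[]].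
    by rewrite pnatM => ->.
  exact: piB.
rewrite (bigID (fun H : {group rT} => (sig sigma j).-group H)) /= in defQ.
have [[P R defP defR] _ _ _] := dprodP defQ.
exists P, R; split; first by rewrite -defP -defR.
  by rewrite /pgroup -(bigdprod_card defP); apply: pgroup_prod.
rewrite /pgroup -(bigdprod_card defR); apply: pgroup_prod => H sH pi'H.
apply/pgroupP=> p p_pr p_dvd; rewrite !inE; apply: contra pi'H => /eqP jp.
apply/pgroupP=> q q_pr q_dvd; rewrite inE -jp; apply/eqP.
apply: (primQ H sH); [exists q | exists p] => //.
  by rewrite mem_primes q_pr cardG_gt0.
by rewrite mem_primes p_pr cardG_gt0.
Qed.

Lemma sigma_nilpotent_pcore_Hall j : (sig sigma j).-Hall(Q) 'O_(sig sigma j)(Q).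
Proof.
have [P [R [defQ jP j'R]]] := sigma_nilpotent_dprod j.
have [nsPQ _] := dprod_normal2 defQ.
suff hallP : (sig sigma j).-Hall(Q) P by rewrite (normal_Hall_pcore hallP nsPQ).
apply/pHallP; split; first exact: normal_sub.
by rewrite -(dprod_card defQ) partnM // part_pnat_id // part_p'nat // muln1.
Qed.

Lemma mem_sigma_nilpotent_pcore j y :
  y \in Q -> (y \in 'O_(sig sigma j)(Q)) = (sig sigma j).-elt y.
Proof. exact: mem_normal_Hall (sigma_nilpotent_pcore_Hall j) (pcore_normal _ _). Qed.

End SigmaNilpotent.

Lemma in_sigma_n_elt sigma (gT : finGroupType) j (X : {group gT}) x :
  x \in X -> (sig sigma j).-elt x -> x != 1 -> in_sigma_n sigma #|X| j.
Proof.
move=> Xx jx ntx; rewrite -order_gt1 -pi_pdiv in ntx.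
exists (pdiv #[x]); first exact: pi_of_dvd (order_dvdG Xx) (cardG_gt0 X) _ ntx.
exact/eqP/(pnatPpi jx ntx).
Qed.

Section SpecialPsT.

Variables (sigma : nat -> nat) (gT : finGroupType) (i : nat) (G D E S : {group gT}).
Hypotheses (resD : is_sigma_nil_residual sigma G D)
  (hallE : (sig sigma i).-Hall(G) E) (sDE : D \subset E)
  (hallD : Hall G D) (powD : conj_power_aut G D) (defE : S ><| D = E).

Local Notation rho j := [predU sig sigma j & \pi(D)].

Lemma sDG : D \subset G. Proof. by case/andP: hallD. Qed.

Lemma normal_subD (M : {group gT}) : M \subset D -> M <| G.
Proof.
move=> sMD; rewrite /normal (subset_trans sMD sDG).
by apply/normsP=> x Gx; apply: powD.
Qed.

Lemma nsDG : D <| G. Proof. exact: normal_subD. Qed.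

Lemma pHall_D : \pi(D).-Hall(G) D. Proof. exact: Hall_pi. Qed.

Lemma memD x : x \in G -> (x \in D) = \pi(D).-elt x.
Proof. exact: mem_normal_Hall pHall_D nsDG. Qed.

Lemma conjD_cycle x d : x \in G -> d \in D -> d ^ x \in <[d]>.
Proof.
move=> Gx Dd; have sCD : <[d]>%G \subset D by rewrite cycle_subG.
by rewrite -(powD Gx sCD) memJ_conjg cycle_id.
Qed.

Lemma piD_sig : {subset \pi(D) <= sig sigma i}.
Proof. by move=> q; apply: pnatPpi (pgroupS sDE (pHall_pgroup hallE)). Qed.

Lemma sig_p'D j : j != i -> {subset sig sigma j <= \pi(D)^'}.
Proof.
move=> nji q; rewrite !inE => /eqP jq; apply: contra nji => /piD_sig.
by rewrite inE jq.
Qed.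

Definition sigma_nil_quotient (N : {group gT}) :=
  N <| G /\ sigma_nilpotent sigma (G / N).

(* W_j, the preimage of O_sigma_j(G / D).  Rather than proving that G / D is
   sigma-nilpotent, intersect the preimages of O_sigma_j(G / N) over all
   sigma-nilpotent quotients G / N. *)
Definition residual_core j : {group gT} :=
  [group of G :&: \bigcap_(N | `[< sigma_nil_quotient N >])
                    coset N @*^-1 'O_(sig sigma j)(G / N)].

Lemma residual_coreP j x :
  reflect (x \in G /\ forall N : {group gT}, sigma_nil_quotient N ->
             x \in coset N @*^-1 'O_(sig sigma j)(G / N))
          (x \in residual_core j).
Proof.
rewrite inE; apply: (iffP andP) => [[Gx /bigcapP Wx] | [Gx Wx]]; split=> //.
  by move=> N /asboolP; apply: Wx.
by apply/bigcapP=> N /asboolP; apply: Wx.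
Qed.

Lemma residual_core_sub j : residual_core j \subset G.
Proof. exact: subsetIl. Qed.

Lemma residual_core_normal j : residual_core j <| G.
Proof.
rewrite /normal residual_core_sub normsI ?normG // norms_bigcap //.
apply/bigcapsP=> N /asboolP[/andP[_ nNG] _].
apply: subset_trans (morphpre_norms _ (normal_norm (pcore_normal _ _))).
by rewrite -sub_quotient_pre.
Qed.

Lemma sub_residual_core j : D \subset residual_core j.
Proof.
apply/subsetP=> d Dd; apply/residual_coreP; split=> [|N [nsNG nilN]].
  exact: subsetP sDG d Dd.
have Nd : d \in N := (resD d).1 Dd N nsNG nilN.
apply/morphpreP; split; last by rewrite /= coset_id.
exact: subsetP (normal_norm nsNG) d (subsetP sDG d Dd).
Qed.

Lemma residual_core_elt j x :
  x \in G -> (sig sigma j).-elt x -> x \in residual_core j.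
Proof.
move=> Gx jx; apply/residual_coreP; split=> // N [nsNG nilN].
have Nx := subsetP (normal_norm nsNG) x Gx.
apply/morphpreP; split=> //.
by rewrite (mem_sigma_nilpotent_pcore nilN) ?mem_quotient ?morph_p_elt.
Qed.

Lemma constt_residual_core j x :
  x \in residual_core j -> x.`_(sig sigma j)^' \in D.
Proof.
move=> Wx; apply/(resD _).2 => N nsNG nilN.
have /residual_coreP[Gx /(_ N (conj nsNG nilN))/morphpreP[Nx Ox]] := Wx.
have jx : (sig sigma j).-elt (coset N x).
    by rewrite -(mem_sigma_nilpotent_pcore nilN) ?mem_quotient.
apply: coset_idr; first by rewrite groupX.
by rewrite morph_constt //; apply/constt1P; rewrite /p_elt pnatNK.
Qed.

Lemma residual_core_pgroup j : (rho j).-group (residual_core j).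
Proof.
apply/pgroupP=> p p_pr p_dvd; have [x Wx ox] := Cauchy p_pr p_dvd.
rewrite !inE; have [//| jp /=] := eqVneq (sigma p) j.
have j'x : (sig sigma j)^'.-elt x by rewrite /p_elt ox pnatE // !inE jp.
have := constt_residual_core Wx; rewrite (constt_p_elt j'x) => Dx.
by rewrite mem_primes p_pr cardG_gt0 -ox order_dvdG.
Qed.

Lemma joinD_mul (T : {group gT}) : T \subset G -> T <*> D = T * D.
Proof.
by move=> sTG; rewrite norm_joinEl // (subset_trans sTG) ?normal_norm ?nsDG.
Qed.

Lemma pHall_joinD j (T : {group gT}) :
  (sig sigma j).-Hall(G) T -> (rho j).-Hall(G) (T <*> D).
Proof.
move=> hallT; have sTG := pHall_sub hallT.
apply: (pHall_predU hallT pHall_D (joing_subl _ _) (joing_subr _ _)).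
  by rewrite join_subG sTG sDG.
rewrite /= joinD_mul // pgroupM; apply/andP; split.
  by apply: sub_pgroup (pHall_pgroup hallT) => q jq; rewrite inE jq.
by apply: sub_pgroup (pnat_pi (cardG_gt0 D)) => q Dq; rewrite !inE Dq orbT.
Qed.

Lemma residual_coreE j (T : {group gT}) :
  (sig sigma j).-Hall(G) T -> residual_core j :=: T <*> D.
Proof.
move=> hallT; apply: sub_pHall (pHall_joinD hallT) (residual_core_pgroup j) _ _.
  rewrite join_subG sub_residual_core andbT; apply/subsetP=> t Tt.
  apply: residual_core_elt (mem_p_elt (pHall_pgroup hallT) Tt).
  exact: subsetP (pHall_sub hallT) t Tt.
exact: residual_core_sub.
Qed.

Lemma sigma_Hall_normal (T : {group gT}) : (sig sigma i).-Hall(G) T -> T <| G.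
Proof.
move=> hallT; have sDT : D \subset T.
  apply: normal_sub_max_pgroup (Hall_max hallT) _ nsDG.
  exact: pgroupS sDE (pHall_pgroup hallE).
by rewrite -(joing_idPl sDT) -(residual_coreE hallT) residual_core_normal.
Qed.

Lemma residual_coreI j k : j != k -> residual_core j :&: residual_core k \subset D.
Proof.
move=> njk; rewrite (sub_normal_Hall pHall_D nsDG); last first.
  exact: subset_trans (subsetIl _ _) (residual_core_sub j).
have : [predI rho j & rho k].-group (residual_core j :&: residual_core k).
  rewrite /pgroup pnatI -!/(pgroup _ _); apply/andP.
  split; apply: pgroupS (residual_core_pgroup _).
    exact: subsetIl.
  exact: subsetIr.
apply: sub_pgroup => q; rewrite !inE => /andP[/orP[/eqP jq | //] /orP[/eqP kq | //]].
by move: njk; rewrite -jq kq eqxx.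
Qed.

Lemma cent_sig_p'elt x :
  x \in G -> (sig sigma i).-elt x -> \pi(D)^'.-elt x -> x \in 'C(D).
Proof.
move=> Gx ix D'x; have [nsSE _ _ nSD tiSD] := sdprod_context defE.
have Ex : x \in E by rewrite (mem_normal_Hall hallE (sigma_Hall_normal hallE)).
have hallS : \pi(D)^'.-Hall(E) S.
  rewrite -(compl_pHall _ (pHall_subl sDE (pHall_sub hallE) pHall_D)).
  by apply/complP; rewrite setIC tiSD -(sdprodWC defE).
have Sx : x \in S by rewrite (mem_normal_Hall hallS nsSE).
have nsDE : D <| E := normalS sDE (pHall_sub hallE) nsDG.
suff cSD : S \subset 'C(D) by apply: subsetP cSD x Sx.
apply/commG1P/trivgP; rewrite -tiSD commg_subI // subsetI ?subxx ?nSD //.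
exact: subset_trans (normal_sub nsSE) (normal_norm nsDE).
Qed.

Section NormalisedByD.

Variable A : {group gT}.
Hypotheses (sAG : A \subset G) (nAD : D \subset 'N(A)).

Local Notation M := (D :&: A)%G.

Lemma normal_setID : D :&: A <| G. Proof. exact/normal_subD/subsetIl. Qed.

Lemma commg_setID a d : a \in A -> d \in D -> [~ a, d] \in D :&: A.
Proof.
move=> Aa Dd; rewrite setIC; apply: subsetP (mem_commg Aa Dd).
rewrite commg_subI // subsetI ?nAD ?subxx //.
exact: subset_trans sAG (normal_norm nsDG).
Qed.

Lemma coset_setID_commute a d :
  a \in A -> d \in D -> commute (coset M a) (coset M d).
Proof.
move=> Aa Dd; have nMG := normal_norm normal_setID.
have [Na Nd] := (subsetP nMG a (subsetP sAG a Aa), subsetP nMG d (subsetP sDG d Dd)).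
by apply/commgP/eqP; rewrite -morphR //= coset_id ?commg_setID.
Qed.

Lemma mem_mul_setID (T : {group gT}) b :
  T \subset G -> \pi(D)^'.-group T -> b \in A -> b \in T * D -> b \in T * (D :&: A).
Proof.
move=> sTG D'T Ab /mulsgP[t d Tt Dd def_b]; rewrite def_b in Ab *.
have nMG := normal_norm normal_setID; have Gt := subsetP sTG t Tt.
have [Nt Nd] := (subsetP nMG t Gt, subsetP nMG d (subsetP sDG d Dd)).
(* Modulo D :&: A, d commutes with t * d, so it is the pi(D)-part of t * d. *)
have ctd : commute (coset M t) (coset M d).
  have := coset_setID_commute Ab Dd; rewrite morphM // => ctd_d.
  by apply: (mulIg (coset M d)); rewrite ctd_d mulgA.
have Dtd : (t * d).`_\pi(D) \in D :&: A.
  by rewrite inE memD ?groupX ?p_elt_constt ?(subsetP sAG).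
rewrite mem_mulg // (coset_idr Nd) //.
have -> : coset M d = (coset M (t * d)).`_\pi(D).
  rewrite morphM // consttM // (constt1P _) ?mul1g ?constt_p_elt //.
    exact: morph_p_elt (mem_p_elt (pHall_pgroup pHall_D) Dd).
  exact: morph_p_elt (mem_p_elt D'T Tt).
by rewrite -morph_constt ?groupM //= coset_id.
Qed.

Lemma commg_p'elt_setID t b :
  t \in G -> b \in A -> \pi(D)^'.-elt b -> [~ t, b] \in D -> [~ t, b] \in D :&: A.
Proof.
move=> Gt Ab D'b Dc; have nMG := normal_norm normal_setID.
have [Nt Nb] := (subsetP nMG t Gt, subsetP nMG b (subsetP sAG b Ab)).
have Nc := subsetP nMG _ (subsetP sDG _ Dc).
apply: coset_idr => //.
have cbc : commute (coset M b) [~ coset M t, coset M b].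
  by rewrite -morphR //; apply: coset_setID_commute.
apply/eqP; rewrite -order_eq1; apply/eqP/(@pnat_1 \pi(D)).
  exact: morph_p_elt (mem_p_elt (pHall_pgroup pHall_D) Dc).
rewrite morphR //; apply: pnat_dvd D'b.
exact: dvdn_trans (order_commg_dvd cbc) (morph_order _ Nb).
Qed.

Lemma mul_constt_mem_mulg j (T : {group gT}) a (p : nat) t :
  j != i -> (sig sigma j).-Hall(G) T -> a \in A -> t \in T -> t * a.`_p \in A * T.
Proof.
move=> nji hallT Aa Tt; set b := a.`_p.
have [sTG jT] := (pHall_sub hallT, pHall_pgroup hallT).
have D'T : \pi(D)^'.-group T := sub_pgroup (sig_p'D nji) jT.
have [Gt Ab] : t \in G /\ b \in A by rewrite (subsetP sTG) ?groupX.
have Gb := subsetP sAG b Ab.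
have sTM_AT : T * (D :&: A) \subset A * T.
  by rewrite (normC (subset_trans sTG (normal_norm normal_setID))) mulSg ?subsetIr.
have pb : p.-elt b := p_elt_constt p a.
have [rho_p | ] := boolP (p \in rho j).
  have TDb : b \in T * D.
    have nsTD : T <*> D <| G by rewrite -(residual_coreE hallT) residual_core_normal.
    rewrite -joinD_mul // (mem_normal_Hall (pHall_joinD hallT) nsTD) //.
    by apply: sub_p_elt pb => q; rewrite inE => /eqP->.
  have /mulsgP[t' m Tt' Mm ->] := mem_mul_setID sTG D'T Ab TDb.
  by rewrite mulgA (subsetP sTM_AT) ?mem_mulg ?groupM.
rewrite !inE negb_or => /andP[jp D'p]; set k := sigma p in jp.
have kb : (sig sigma k).-elt b by apply: sub_p_elt pb => q; rewrite !inE => /eqP->.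
have D'b : \pi(D)^'.-elt b by apply: sub_p_elt pb => q; rewrite !inE => /eqP->.
have Dc : [~ t, b] \in D.
  have nWkG := normal_norm (residual_core_normal k).
  have nWjG := normal_norm (residual_core_normal j).
  apply: subsetP (residual_coreI jp) _ _; rewrite inE; apply/andP; split.
    by rewrite commgEr groupM ?memJ_norm ?groupV ?residual_core_elt ?(subsetP nWkG).
  by rewrite commgEl groupM ?groupV ?memJ_norm ?residual_core_elt
             ?(subsetP nWjG) ?(mem_p_elt jT).
have /mulsgP[a' t' Aa' Tt' eq_tc] :=
  subsetP sTM_AT _ (mem_mulg Tt (commg_p'elt_setID Gt Ab D'b Dc)).
by rewrite conjgC -(mulKVg t (t ^ b)) -commgEl eq_tc mulgA mem_mulg ?groupM.
Qed.

Lemma commute_sigma_Hall j (T : {group gT}) : (sig sigma j).-Hall(G) T -> commute A T.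
Proof.
move=> hallT; have [eq_ji | nji] := eqVneq j i.
  rewrite eq_ji in hallT.
  exact: normC (subset_trans sAG (normal_norm (sigma_Hall_normal hallT))).
suff sTA : T * A \subset A * T.
  by apply/esym/eqP; rewrite eqEcard sTA -[#|A * T|]card_invg invMG /=.
apply/subsetP=> _ /mulsgP[t a Tt Aa ->]; move: t Tt.
apply: (constt_prod_ind (P := fun y => forall t, t \in T -> t * y \in A * T)).
- by move=> t Tt; rewrite mulg1 -[t]mul1g mem_mulg.
- move=> y z Py Pz t Tt; rewrite mulgA.
  have /mulsgP[a1 t1 Aa1 Tt1 ->] := Py t Tt; rewrite -mulgA.
  by have /mulsgP[a2 t2 Aa2 Tt2 ->] := Pz t1 Tt1; rewrite mulgA mem_mulg ?groupM.
by move=> p t Tt; apply: mul_constt_mem_mulg nji hallT Aa Tt.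
Qed.

End NormalisedByD.

Lemma setID_mul_p'group (A V : {group gT}) :
  A \subset G -> V \subset G -> \pi(D)^'.-group V -> commute A V ->
  D :&: (A * V) = D :&: A.
Proof.
move=> sAG sVG D'V cAV; have gAV : group_set (A * V) by apply/comm_group_setP.
have sAVG : Group gAV \subset G by rewrite /= mul_subG.
apply/eqP; rewrite eq_sym eqEcard setIS ?mulG_subl //=.
rewrite (card_Hall (setI_normal_Hall nsDG pHall_D sAG)).
rewrite -[A * V]/(gval (Group gAV)) (card_Hall (setI_normal_Hall nsDG pHall_D sAVG)).
have := congr1 (partn^~ \pi(D)) (mul_cardG A V).
rewrite /= !partnM ?cardG_gt0 // -[#|A * V|]/#|Group gAV| ?cardG_gt0 //.
rewrite (part_p'nat D'V) muln1 => ->.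
by rewrite leq_pmulr // part_gt0.
Qed.

Lemma conjD_mem_commute (A U : {group gT}) u l :
    A \subset G -> U \subset G -> \pi(D)^'.-group U -> l \in D ->
    commute A (U :^ l) -> u \in A :&: U ->
  u ^ l \in A.
Proof.
move=> sAG sUG D'U Dl cAUl /setIP[Au Uu]; have Gl := subsetP sDG l Dl.
have : [~ u, l] \in D :&: (A * U :^ l).
  rewrite inE; apply/andP; split.
    rewrite commgEr groupM ?memJ_norm ?groupV //.
    exact: subsetP (normal_norm nsDG) u (subsetP sAG u Au).
  by rewrite commgEl mem_mulg ?groupV ?memJ_conjg.
rewrite (setID_mul_p'group (V := (U :^ l)%G)) ?conj_subG ?pgroupJ // => /setIP[_ Aul].
by rewrite -(mulKVg u (u ^ l)) -commgEl groupM.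
Qed.

Lemma setI_residual_core j (X A U : {group gT}) :
    X \subset G -> A \subset X -> (sig sigma j).-Hall(X) U -> commute A U ->
  A :&: residual_core j = (A :&: U) * (D :&: A).
Proof.
move=> sXG sAX hallU cAU; have sAG := subset_trans sAX sXG.
have hallAU := pHall_setI_commute hallU sAX cAU.
have hallAD : \pi(D).-Hall(A) (D :&: A) := setI_normal_Hall nsDG pHall_D sAG.
have defV : (A :&: U) <*> (D :&: A) = (A :&: U) * (D :&: A).
  rewrite norm_joinEl // (subset_trans (subset_trans (subsetIl _ _) sAG)) //.
  exact/normal_norm/normal_subD/subsetIl.
have hallV : (rho j).-Hall(A) ((A :&: U) <*> (D :&: A)).
  apply: (pHall_predU hallAU hallAD (joing_subl _ _) (joing_subr _ _)).
    by rewrite join_subG subsetIl subsetIr.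
  rewrite /= defV pgroupM; apply/andP; split.
    by apply: sub_pgroup (pHall_pgroup hallAU) => q jq; rewrite inE jq.
  by apply: sub_pgroup (pHall_pgroup hallAD) => q Dq; rewrite !inE Dq orbT.
rewrite -defV; apply: sub_pHall hallV _ _ (subsetIl _ _).
  exact: pgroupS (subsetIr _ _) (residual_core_pgroup j).
rewrite join_subG; apply/andP; split; apply/subsetP.
  move=> u /setIP[Au Uu].
  rewrite inE Au residual_core_elt ?(subsetP sAG u Au) //.
  exact: mem_p_elt (pHall_pgroup hallU) Uu.
by move=> m /setIP[Dm Am]; rewrite inE Am (subsetP (sub_residual_core j)).
Qed.

Lemma conj_sigma_elt_mem j (X A U : {group gT}) l b :
    j != i -> X \subset G -> A \subset X -> (sig sigma j).-Hall(X) U ->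
    {in X, forall x, commute A (U :^ x)} -> l \in X :&: D ->
    b \in A -> (sig sigma j).-elt b ->
  b ^ l \in A.
Proof.
move=> nji sXG sAX hallU cAU /setIP[Xl Dl] Ab jb.
have [sAG sUG] := (subset_trans sAX sXG, subset_trans (pHall_sub hallU) sXG).
have D'U : \pi(D)^'.-group U := sub_pgroup (sig_p'D nji) (pHall_pgroup hallU).
have cAU1 : commute A U by have := cAU 1 (group1 X); rewrite conjsg1.
have : b \in A :&: residual_core j by rewrite inE Ab residual_core_elt ?(subsetP sAG).
rewrite (setI_residual_core sXG sAX hallU cAU1) => /mulsgP[u m AUu /setIP[Dm Am] ->].
rewrite conjMg groupM ?(conjD_mem_commute sAG sUG D'U Dl (cAU l Xl) AUu) //.
by apply: subsetP (conjD_cycle (subsetP sDG l Dl) Dm); rewrite cycle_subG.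
Qed.

Lemma sigma_quasinormal_norm (X A : {group gT}) :
  X \subset G -> sigma_quasinormal sigma X A -> X :&: D \subset 'N(A).
Proof.
move=> sXG [sAX [HH [[_ hallHH] cAHH]]]; have sAG := subset_trans sAX sXG.
apply/subsetP=> l XDl; have /setIP[Xl Dl] := XDl; have Gl := subsetP sXG l Xl.
rewrite inE; apply/subsetP=> _ /imsetP[a Aa ->].
rewrite -mem_conjgV -(prod_constt a); apply: group_prod => p _; rewrite mem_conjgV.
set b := a.`_p; have Ab : b \in A := groupX _ Aa; have pb := p_elt_constt p a.
have [Dp | D'p] := boolP (p \in \pi(D)).
  have Db : b \in D.
    by rewrite memD ?(subsetP sAG) // (sub_p_elt _ pb) // => q; rewrite inE => /eqP->.
  by apply: subsetP (conjD_cycle Gl Db); rewrite cycle_subG.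
have jb : (sig sigma (sigma p)).-elt b.
  by apply: sub_p_elt pb => q; rewrite !inE => /eqP->.
have [ip | nji] := eqVneq (sigma p) i.
  have D'b : \pi(D)^'.-elt b by apply: sub_p_elt pb => q; rewrite !inE => /eqP->.
  have cDb : b \in 'C(D) by rewrite cent_sig_p'elt -?ip ?(subsetP sAG).
  by rewrite /conjg (centP cDb l Dl) mulKg.
have [-> | ntb] := eqVneq b 1; first by rewrite conj1g.
have [U [[HHU hallU] _]] := hallHH _ (in_sigma_n_elt (subsetP sAX b Ab) jb ntb).
exact: conj_sigma_elt_mem nji sXG sAX hallU (cAHH U HHU) XDl Ab jb.
Qed.

Lemma conj_p'elt_mem (H K : {group gT}) x d :
    D \subset 'N(H) -> H :&: D \subset 'N(K) -> x \in K -> x \in H -> x \in G ->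
    \pi(D)^'.-elt x -> d \in D ->
  x ^ d \in K.
Proof.
move=> nHD nKHD Kx Hx Gx D'x Dd.
have sCD : <[d]>%G \subset D by rewrite cycle_subG.
have nCx : <[x]> \subset 'N(<[d]>) by rewrite cycle_subG inE (powD Gx sCD).
set Y := [~: <[d]>, (<[x]>)].
have tiYx : 'C_Y[x] = 1.
  rewrite -cent_cycle coprime_abel_cent_TI ?cycle_abelian //.
  exact: pnat_coprime (mem_p_elt (pHall_pgroup pHall_D) Dd) D'x.
have sYHD : Y \subset H :&: D.
  rewrite subsetI (subset_trans _ sCD) ?commg_subl // andbT.
  apply: subset_trans (commgSS sCD (_ : <[x]> \subset H)) _; rewrite ?cycle_subG //.
  by rewrite commg_subr.
(* x acts fixed-point-freely on Y, so [~ d, x] = [~ y, x] with y in H :&: D. *)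
have : [~ d, x] \in [set [~ y, x] | y in Y].
  by rewrite commg_imset_cent_TI ?mem_commg ?cycle_id // -cycle_subG commg_normr.
case/imsetP=> y Yy dx; have Ny := subsetP nKHD y (subsetP sYHD y Yy).
have Kdx : [~ d, x] \in K by rewrite dx commgEr groupM ?memJ_norm ?groupV.
by rewrite -(mulKVg x (x ^ d)) -commgEl -invg_comm groupM ?groupV.
Qed.

Lemma norm_lift (H K : {group gT}) :
    H \subset G -> D \subset 'N(H) -> H :&: D \subset 'N(K) -> K \subset H ->
  D \subset 'N(K).
Proof.
move=> sHG nHD nKHD sKH; apply/subsetP=> d Dd; rewrite inE.
apply/subsetP=> _ /imsetP[k Kk ->]; have Hk := subsetP sKH k Kk.
have Gk := subsetP sHG k Hk.
rewrite -(consttC \pi(D) k) conjMg groupM //.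
  have Dk : k.`_\pi(D) \in D by rewrite memD ?groupX ?p_elt_constt.
  by apply: subsetP (conjD_cycle (subsetP sDG d Dd) Dk); rewrite cycle_subG groupX.
by apply: conj_p'elt_mem nHD nKHD _ _ _ _ Dd; rewrite ?groupX ?p_elt_constt.
Qed.

Lemma special_data_PsT : PsT sigma G.
Proof.
move=> K H qKH qHG; have [sKH _] := qKH; have [sHG [HH [hallHH _]]] := qHG.
have nHD : D \subset 'N(H).
  by have := sigma_quasinormal_norm (subxx G) qHG; rewrite (setIidPr sDG).
have nKD := norm_lift sHG nHD (sigma_quasinormal_norm sHG qKH) sKH.
split; first exact: subset_trans sKH sHG.
exists HH; split=> // T HHT x Gx.
have [-> | ntT] := eqVneq (T : {set gT}) 1; first by rewrite conjs1g mulg1 mul1g.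
have [j hallT] := hallHH.1 T HHT ntT.
have hallTx : (sig sigma j).-Hall(G) (T :^ x)%G by rewrite pHallJ.
exact: (commute_sigma_Hall (subset_trans sKH sHG) nKD hallTx).
Qed.

End SpecialPsT.

Theorem lemma3p1 (sigma : nat -> nat) (gT : finGroupType) (G : {group gT}) :
  special_PsT sigma G -> PsT sigma G.
Proof.
case=> D [resD [i [E [hallE sDE [hallD powD] [S defE]]]]].
exact: special_data_PsT resD hallE sDE hallD powD defE.
Qed.
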